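(* Let $A$ and $B$ be connected graded $k$-algebras generated in degree $1$. Suppose that $d=\dim_k A_1<\infty$ and that $A_{\ge1}$ is the unique codimension $1$ ideal of $A$ with tangent dimension $d$. If $A\cong B$ as ungraded algebras, then $A\cong B$ as graded algebras.
   Context: A connected graded algebra satisfies $A_0=k$, and $A_{\ge1}=\bigoplus_{i\ge1}A_i$. A codimension $1$ ideal of tangent dimension $s$ in an algebra $R$ is a two-sided ideal $I$ with $\dim_k R/I=1$ and $\dim_k I/I^2=s$. *)

(* Algebras over a field k are MathComp [algType k]
   (associative, unital); gradings and quotient dimensions are defined
   literally since the algebras may be infinite dimensional. *)
From HB Require Import structures.
From mathcomp Require Import all_boot all_order all_algebra.
Set Implicit Arguments. Unset Strict Implicit. Unset Printing Implicit Defensive.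
Import GRing.Theory.
Local Open Scope ring_scope.

Section Defs.
Variables (k : fieldType) (A : algType k).

Definition subspace (P : A -> Prop) : Prop :=
  P 0 /\ (forall (a : k) x y, P x -> P y -> P (a *: x + y)).

Definition two_sided_ideal (I : A -> Prop) : Prop :=
  subspace I /\ (forall a x, I x -> I (a * x)) /\ (forall a x, I x -> I (x * a)).

Definition ideal_sq (I : A -> Prop) : A -> Prop := fun z =>
  exists (n : nat) (f g : nat -> A),
    (forall i, I (f i)) /\ (forall i, I (g i)) /\ z = \sum_(i < n) f i * g i.

(* dim_k P/Q = n  (for subspaces Q <= P): the classes of b_0..b_{n-1}
   form a basis of P/Q. *)
Definition qdim (P Q : A -> Prop) (n : nat) : Prop :=
  exists b : 'I_n -> A,
    (forall i, P (b i)) /\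
    (forall x, P x -> exists c : 'I_n -> k, Q (x - \sum_i c i *: b i)) /\
    (forall c : 'I_n -> k, Q (\sum_i c i *: b i) -> forall i, c i = 0).

Definition sdim (P : A -> Prop) (n : nat) : Prop := qdim P (fun x => x = 0) n.

Definition codim1_ideal_tdim (I : A -> Prop) (s : nat) : Prop :=
  two_sided_ideal I /\ qdim (fun _ => True) I 1 /\ qdim I (ideal_sq I) s.

Definition is_grading (G : nat -> A -> Prop) : Prop :=
  (forall i, subspace (G i)) /\
  (forall i j x y, G i x -> G j y -> G (i + j)%N (x * y)) /\
  (forall x, exists (n : nat) (f : nat -> A),
       (forall i, G i (f i)) /\ x = \sum_(i < n) f i) /\
  (forall (n : nat) (f : nat -> A), (forall i, G i (f i)) ->
       \sum_(i < n) f i = 0 -> forall i, (i < n)%N -> f i = 0).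

Definition connected_graded (G : nat -> A -> Prop) : Prop :=
  is_grading G /\ (forall x, G 0%N x <-> exists c : k, x = c%:A).

Definition generated_in_deg1 (G : nat -> A -> Prop) : Prop :=
  forall S : A -> Prop,
    S 1 -> (forall (a : k) x y, S x -> S y -> S (a *: x + y)) ->
    (forall x y, S x -> S y -> S (x * y)) ->
    (forall x, G 1%N x -> S x) -> forall x, S x.

Definition pos_part (G : nat -> A -> Prop) : A -> Prop := fun x =>
  exists (n : nat) (f : nat -> A),
    (forall i, G i.+1 (f i)) /\ x = \sum_(i < n) f i.

End Defs.

Definition alg_iso (k : fieldType) (A B : algType k) (f : A -> B) : Prop :=
  (forall (a : k) x y, f (a *: x + y) = a *: f x + f y) /\
  (forall x y, f (x * y) = f x * f y) /\ f 1 = 1 /\ bijective f.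

From HB Require Import structures.
From mathcomp Require Import all_boot all_order all_algebra.
From Stdlib Require Import ClassicalEpsilon.
Set Implicit Arguments. Unset Strict Implicit. Unset Printing Implicit Defensive.
Import GRing.Theory.
Local Open Scope ring_scope.

(* Transport along an ungraded isomorphism [phi : A -> B]
   preserves codimension 1 ideals together with their tangent dimensions.
   In an algebra generated in degree 1, the tangent space [J/J^2] of any
   codimension 1 ideal [J] is spanned by the classes of [z - e(z)], [z] of
   degree 1, where [e] is the augmentation of [J]; for [J = B_{>=1}] this is
   an isomorphism [B_1 ~ J/J^2].  Comparing [phi(A_{>=1})] and
   [phi^-1(B_{>=1})] in this way shows [dim B_1 = d], so [phi^-1(B_{>=1})] has
   tangent dimension [d] and, by uniqueness, equals [A_{>=1}].  Hence [phi]
   and its inverse preserve the filtrations by the powers of the augmentation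
   ideals, and the associated graded map [x_n |-> (phi x_n)_n] is a graded
   isomorphism. *)

Lemma sum_ord_tail0 (V : zmodType) (g : nat -> V) N M :
  (forall i, (N <= i)%N -> g i = 0) -> (N <= M)%N ->
  \sum_(i < M) g i = \sum_(i < N) g i.
Proof.
move=> g0 NM; rewrite -(subnKC NM) big_split_ord /= [X in _ + X]big1 ?addr0 //.
by move=> i _; apply: g0; rewrite leq_addr.
Qed.

Section Subspaces.
Variables (k : fieldType) (A : algType k).
Implicit Types (P J : A -> Prop) (x y : A).

Lemma subspace0 P : subspace P -> P 0.
Proof. by case. Qed.

Lemma subspaceD P x y : subspace P -> P x -> P y -> P (x + y).
Proof. by case=> _ sP Px Py; have := sP 1 x y Px Py; rewrite scale1r. Qed.

Lemma subspaceZ P a x : subspace P -> P x -> P (a *: x).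
Proof. by case=> P0 sP Px; have := sP a x 0 Px P0; rewrite addr0. Qed.

Lemma subspaceB P x y : subspace P -> P x -> P y -> P (x - y).
Proof.
by move=> sP Px Py; apply: subspaceD; rewrite // -scaleN1r; apply: subspaceZ.
Qed.

Lemma subspace_sum P (I : Type) (r : seq I) (Q : pred I) (F : I -> A) :
  subspace P -> (forall i, Q i -> P (F i)) -> P (\sum_(i <- r | Q i) F i).
Proof.
move=> sP PF; apply: (big_ind P) => //; first exact: subspace0.
by move=> x y; apply: subspaceD.
Qed.

Lemma ideal_sq_subspace J : subspace J -> subspace (ideal_sq J).
Proof.
move=> sJ; split.
  exists 0%N, (fun _ => 0), (fun _ => 0).
  by rewrite big_ord0; split=> [_|]; [|split=> // _]; apply: subspace0.
move=> a _ _ [n [f [g [Jf [Jg ->]]]]] [m [f' [g' [Jf' [Jg' ->]]]]].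
exists (n + m)%N, (fun i => if (i < n)%N then a *: f i else f' (i - n)%N),
  (fun i => if (i < n)%N then g i else g' (i - n)%N).
split; last split.
- by move=> i; case: ifP => _ //; apply: subspaceZ.
- by move=> i; case: ifP.
- rewrite big_split_ord /= scaler_sumr; congr (_ + _).
    by apply: eq_bigr => -[i ltin] _ /=; rewrite ltin scalerAl.
  by apply: eq_bigr => i _; rewrite ltnNge leq_addr /= addKn.
Qed.

Lemma ideal_sq_mul J x y : J x -> J y -> ideal_sq J (x * y).
Proof.
move=> Jx Jy; exists 1%N, (fun _ => x), (fun _ => y).
by split=> //; split=> //; rewrite big_ord1.
Qed.

Lemma ideal_subspace J : two_sided_ideal J -> subspace J.
Proof. by case. Qed.

Lemma idealMr J a x : two_sided_ideal J -> J x -> J (x * a).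
Proof. by case=> _ [_ JM]; apply: JM. Qed.

Lemma codim1_idealP J : two_sided_ideal J -> qdim (fun _ => True) J 1 ->
  (forall x, exists c, J (x - c *: 1)) /\ (forall c, J (c *: 1) -> c = 0).
Proof.
move=> iJ [b [_ [bspan bfree]]]; have sJ := ideal_subspace iJ.
set b0 := b ord0.
have span0 x : exists c, J (x - c *: b0).
  by have [c] := bspan x I; rewrite big_ord1; exists (c ord0).
have free0 c : J (c *: b0) -> c = 0.
  by move=> Jc; have := bfree (fun _ => c); rewrite big_ord1 => /(_ Jc ord0).
have [c1 Jc1] := span0 1.
have c1_neq0 : c1 != 0.
  apply/eqP=> c10; move: Jc1; rewrite c10 scale0r subr0 => J1.
  have : J (1 *: b0) by rewrite scale1r -[b0]mul1r; apply: idealMr.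
  by move/free0/eqP; rewrite oner_eq0.
split=> [x|c Jc].
  have [c Jc] := span0 x; exists (c * c1^-1).
  have -> : x - (c * c1^-1) *: 1 = (x - c *: b0) - (c * c1^-1) *: (1 - c1 *: b0).
    rewrite scalerBr scalerA -mulrA mulVf // mulr1 opprB.
    by rewrite addrA subrK.
  by apply: subspaceB => //; apply: subspaceZ.
have : J ((c * c1) *: b0).
  have -> : (c * c1) *: b0 = c *: 1 - c *: (1 - c1 *: b0).
    by rewrite scalerBr opprB scalerA addrC subrK.
  by apply: subspaceB => //; apply: subspaceZ.
by move/free0/eqP; rewrite mulf_eq0 (negbTE c1_neq0) orbF => /eqP.
Qed.

Lemma qdim_eq P Q Q' n :
  (forall x, Q x <-> Q' x) -> qdim P Q n -> qdim P Q' n.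
Proof.
move=> QQ' [b [Pb [bspan bfree]]]; exists b; split=> //; split.
  by move=> x Px; have [c Qc] := bspan x Px; exists c; apply/QQ'.
by move=> c /QQ'; apply: bfree.
Qed.

End Subspaces.

Section LinearMaps.
Variables (k : fieldType) (A B : algType k) (f : A -> B).
Hypothesis f_lin : forall (a : k) x y, f (a *: x + y) = a *: f x + f y.

Lemma lin0 : f 0 = 0.
Proof.
by have := f_lin 1 0 0; rewrite !scale1r addr0 => f00; apply: (addrI (f 0)); rewrite addr0 -f00.
Qed.

Lemma linD x y : f (x + y) = f x + f y.
Proof. by have := f_lin 1 x y; rewrite !scale1r. Qed.

Lemma linZ a x : f (a *: x) = a *: f x.
Proof. by have := f_lin a x 0; rewrite !addr0 lin0 addr0. Qed.

Lemma linB x y : f (x - y) = f x - f y.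
Proof. by rewrite linD -scaleN1r linZ scaleN1r. Qed.

Lemma lin_sum (I : Type) (r : seq I) (P : pred I) (F : I -> A) :
  f (\sum_(i <- r | P i) F i) = \sum_(i <- r | P i) f (F i).
Proof. exact: (big_morph f linD lin0). Qed.

End LinearMaps.

Section Preimage.
Variables (k : fieldType) (A B : algType k) (f : A -> B) (g : B -> A).
Hypothesis f_lin : forall (a : k) x y, f (a *: x + y) = a *: f x + f y.
Hypothesis fM : forall x y, f (x * y) = f x * f y.
Hypothesis fK : cancel f g.
Hypothesis gK : cancel g f.

Lemma inv_lin (a : k) x y : g (a *: x + y) = a *: g x + g y.
Proof. by apply: (can_inj fK); rewrite gK f_lin !gK. Qed.

Lemma invM x y : g (x * y) = g x * g y.
Proof. by apply: (can_inj fK); rewrite gK fM !gK. Qed.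

Lemma preim_ideal (J : B -> Prop) :
  two_sided_ideal J -> two_sided_ideal (fun x => J (f x)).
Proof.
move=> [[J0 Jlin] [JMl JMr]]; split.
  by split=> [|a x y Jx Jy]; rewrite ?lin0 ?f_lin //; apply: Jlin.
by split=> a x Jx; rewrite fM; [apply: JMl|apply: JMr].
Qed.

Lemma preim_ideal_sq (J : B -> Prop) x :
  ideal_sq (fun x => J (f x)) x <-> ideal_sq J (f x).
Proof.
split=> [[n [u [v [Ju [Jv ->]]]]]|[n [u [v [Ju [Jv fx]]]]]].
  exists n, (fun i => f (u i)), (fun i => f (v i)); split=> //; split=> //.
  by rewrite (lin_sum f_lin); apply: eq_bigr => i _; rewrite fM.
exists n, (fun i => g (u i)), (fun i => g (v i)).
split=> [i|]; first by rewrite gK.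
split=> [i|]; first by rewrite gK.
apply: (can_inj fK); rewrite (lin_sum f_lin) fx.
by apply: eq_bigr => i _; rewrite fM !gK.
Qed.

Lemma preim_qdim (P Q : B -> Prop) n :
  qdim P Q n -> qdim (fun x => P (f x)) (fun x => Q (f x)) n.
Proof.
have fsum (c : 'I_n -> k) b : f (\sum_i c i *: g (b i)) = \sum_i c i *: b i.
  by rewrite (lin_sum f_lin); apply: eq_bigr => i _; rewrite (linZ f_lin) gK.
move=> [b [Pb [bspan bfree]]]; exists (fun i => g (b i)).
split=> [i|]; first by rewrite gK.
split=> [x Px|c]; last by rewrite fsum; apply: bfree.
by have [c Qc] := bspan _ Px; exists c; rewrite (linB f_lin) fsum.
Qed.

Lemma preim_codim1_ideal_tdim (J : B -> Prop) s :
  codim1_ideal_tdim J s -> codim1_ideal_tdim (fun x => J (f x)) s.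
Proof.
move=> [iJ [codimJ tdimJ]]; split; first exact: preim_ideal.
split; first exact: (preim_qdim codimJ).
apply: (qdim_eq (Q := fun x => ideal_sq J (f x))); last exact: (preim_qdim tdimJ).
by move=> x; rewrite preim_ideal_sq.
Qed.

Lemma preim_span_mod_sq (J : B -> Prop) p (v : 'I_p -> A) :
  (forall x, J (f x) -> exists a : 'I_p -> k,
     ideal_sq (fun x => J (f x)) (x - \sum_i a i *: v i)) ->
  forall y, J y -> exists a : 'I_p -> k, ideal_sq J (y - \sum_i a i *: f (v i)).
Proof.
move=> vspan y Jy; have [|a sq_a] := vspan (g y); first by rewrite gK.
exists a; move/preim_ideal_sq: sq_a; rewrite (linB f_lin) gK (lin_sum f_lin).
by under eq_bigr => i _ do rewrite (linZ f_lin).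
Qed.

End Preimage.

(* The coordinates of the [w j] on the [v i] form a matrix with a nonzero
   left kernel. *)
Lemma span_mod_dependent (k : fieldType) (A : algType k) (P Q : A -> Prop)
    p m (v : 'I_p -> A) (w : 'I_m -> A) :
  subspace Q -> (forall j, P (w j)) ->
  (forall x, P x -> exists a : 'I_p -> k, Q (x - \sum_i a i *: v i)) ->
  (p < m)%N ->
  exists a : 'I_m -> k, (exists j, a j != 0) /\ Q (\sum_j a j *: w j).
Proof.
move=> sQ Pw vspan ltpm.
have /fin_all_exists [C QC] j := vspan (w j) (Pw j).
pose M : 'M[k]_(m, p) := \matrix_(j, i) C j i.
have ker_neq0 : kermx M != 0.
  apply/eqP=> ker0; have := mxrank_ker M; rewrite ker0 mxrank0 => /esym/eqP.
  rewrite subn_eq0 => lemr; have := leq_trans lemr (rank_leq_col M).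
  by rewrite leqNgt ltpm.
set r := nz_row (kermx M).
have r_neq0 : r != 0 by rewrite nz_row_eq0.
have rM0 : r *m M = 0 by apply/eqP; rewrite -sub_kermx nz_row_sub.
exists (fun j => r 0 j); split.
  apply/existsP; move: r_neq0; apply: contraR => /existsPn r0.
  by apply/eqP/rowP => j; rewrite mxE; apply/eqP/negPn/r0.
have -> : \sum_j r 0 j *: w j = \sum_j r 0 j *: (w j - \sum_i C j i *: v i)
                              + \sum_j r 0 j *: \sum_i C j i *: v i.
  by rewrite -big_split /=; apply: eq_bigr => j _; rewrite -scalerDr subrK.
have -> : \sum_j r 0 j *: \sum_i C j i *: v i = 0.
  under eq_bigr => j _ do rewrite scaler_sumr.
  rewrite exchange_big /= big1 // => i _.
  under eq_bigr => j _ do rewrite scalerA.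
  rewrite -scaler_suml; have -> : \sum_j r 0 j * C j i = (r *m M) 0 i.
    by rewrite mxE; apply: eq_bigr => j _; rewrite mxE.
  by rewrite rM0 mxE scale0r.
by rewrite addr0; apply: (subspace_sum _ sQ) => j _; apply: (subspaceZ _ sQ).
Qed.

Lemma free_dependent_span (k : fieldType) (V : lmodType k) d (z : 'I_d -> V) y
    (a : 'I_d.+1 -> k) :
  (forall c : 'I_d -> k, \sum_i c i *: z i = 0 -> forall i, c i = 0) ->
  (exists j, a j != 0) -> \sum_j a j *: oapp z y (unlift ord0 j) = 0 ->
  exists c : 'I_d -> k, y = \sum_i c i *: z i.
Proof.
move=> zfree [j0 aj0]; rewrite big_ord_recl unlift_none.
under eq_bigr => i _ do rewrite liftK /=.
have [a00|a0_neq0] := eqVneq (a ord0) 0.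
  rewrite a00 scale0r add0r => /zfree a0; move: aj0.
  by case: (unliftP ord0 j0) => [i|] ->; rewrite ?a0 ?a00 eqxx.
move=> /eqP; rewrite addr_eq0 => /eqP ay.
exists (fun i => - (a ord0)^-1 * a (lift ord0 i)).
rewrite -[y](scalerK a0_neq0) ay scalerN -scaleNr scaler_sumr.
by apply: eq_bigr => i _; rewrite scalerA.
Qed.

Section ConnectedGraded.
Variables (k : fieldType) (A : algType k) (G : nat -> A -> Prop).
Hypothesis G_conn : connected_graded G.

Let G_grading : is_grading G := proj1 G_conn.

Lemma homog_subspace i : subspace (G i).
Proof. by case: G_grading. Qed.

Lemma homogM i j x y : G i x -> G j y -> G (i + j)%N (x * y).
Proof. by case: G_grading => _ [GM _]; apply: GM. Qed.

Lemma homog0 i : G i 0.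
Proof. exact: subspace0 (homog_subspace i). Qed.

Lemma homog1 : G 0 1.
Proof. by apply/(proj2 G_conn); exists 1; rewrite scale1r. Qed.

Definition hdecomp (x : A) (g : nat -> A) :=
  (forall i, G i (g i)) /\
  exists N, (forall i, (N <= i)%N -> g i = 0) /\ x = \sum_(i < N) g i.

Lemma hdecomp_exists x : exists g, hdecomp x g.
Proof.
case: G_grading => _ [_ [Gspan _]]; have [n [f [Gf ->]]] := Gspan x.
exists (fun i => if (i < n)%N then f i else 0); split.
  by move=> i; case: ifP => _ //; apply: homog0.
exists n; split; first by move=> i; rewrite leqNgt => /negbTE ->.
by apply: eq_bigr => i _; rewrite ltn_ord.
Qed.

Lemma hdecomp_unique x g g' : hdecomp x g -> hdecomp x g' -> g =1 g'.
Proof.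
move=> [Gg [N [g0 ->]]] [Gg' [N' [g'0 E]]] i; set M := maxn N N'.
have sum_gg' : \sum_(j < M) (g j - g' j) = 0.
  rewrite sumrB (sum_ord_tail0 g0) ?leq_maxl // (sum_ord_tail0 g'0) ?leq_maxr //.
  by rewrite E subrr.
case: (ltnP i M) => ltiM; last first.
  by rewrite g0 ?g'0 //; apply: leq_trans ltiM; rewrite ?leq_maxl ?leq_maxr.
apply/eqP; rewrite -subr_eq0; apply/eqP.
case: G_grading => _ [_ [_ Gfree]].
apply: (Gfree M (fun j => g j - g' j)) => // j.
by apply: subspaceB; [apply: homog_subspace| |].
Qed.

Definition hcomp (x : A) : nat -> A :=
  proj1_sig (constructive_indefinite_description _ (hdecomp_exists x)).

Lemma hcomp_hdecomp x : hdecomp x (hcomp x).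
Proof. exact: proj2_sig (constructive_indefinite_description _ (hdecomp_exists x)). Qed.

Lemma hcomp_homog x i : G i (hcomp x i).
Proof. by case: (hcomp_hdecomp x). Qed.

Lemma hcomp_eq x g : hdecomp x g -> hcomp x =1 g.
Proof. exact/hdecomp_unique/hcomp_hdecomp. Qed.

Lemma hcomp_bounded x : exists N, forall i, (N <= i)%N -> hcomp x i = 0.
Proof. by case: (hcomp_hdecomp x) => _ [N [hx0 _]]; exists N. Qed.

Definition hbound x : nat :=
  proj1_sig (constructive_indefinite_description _ (hcomp_bounded x)).

Lemma hboundP x i : (hbound x <= i)%N -> hcomp x i = 0.
Proof. move: i; exact: proj2_sig (constructive_indefinite_description _ (hcomp_bounded x)). Qed.

Lemma hcomp_sum x N : (forall i, (N <= i)%N -> hcomp x i = 0) ->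
  x = \sum_(i < N) hcomp x i.
Proof.
move=> hx0; case: (hcomp_hdecomp x) => _ [N0 [hx0' E]].
by rewrite -(sum_ord_tail0 hx0 (leq_maxl N N0)) (sum_ord_tail0 hx0' (leq_maxr N N0)).
Qed.

Lemma hcomp_lin a x y i : hcomp (a *: x + y) i = a *: hcomp x i + hcomp y i.
Proof.
apply: (@hcomp_eq _ (fun j => a *: hcomp x j + hcomp y j)); split.
  by move=> j; case: (homog_subspace j) => _; apply; apply: hcomp_homog.
have [N1 hx0] := hcomp_bounded x; have [N2 hy0] := hcomp_bounded y.
exists (maxn N1 N2); split.
  by move=> j; rewrite geq_max => /andP[j1 j2]; rewrite hx0 // hy0 // scaler0 addr0.
rewrite big_split /= -scaler_sumr -!hcomp_sum // => j lejN;
  [apply: hy0|apply: hx0]; by apply: leq_trans lejN; rewrite ?leq_maxl ?leq_maxr.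
Qed.

Lemma hcomp0 i : hcomp 0 i = 0.
Proof.
have := hcomp_lin 1 0 0 i; rewrite !scale1r addr0 => h00.
by apply: (addrI (hcomp 0 i)); rewrite addr0 -h00.
Qed.

Lemma hcompD x y i : hcomp (x + y) i = hcomp x i + hcomp y i.
Proof. by have := hcomp_lin 1 x y i; rewrite !scale1r. Qed.

Lemma hcompZ a x i : hcomp (a *: x) i = a *: hcomp x i.
Proof. by have := hcomp_lin a x 0 i; rewrite !addr0 hcomp0 addr0. Qed.

Lemma hcompB x y i : hcomp (x - y) i = hcomp x i - hcomp y i.
Proof. by rewrite -scaleN1r addrC hcomp_lin scaleN1r addrC. Qed.

Lemma hcomp_big (I : Type) (r : seq I) (P : pred I) (F : I -> A) i :
  hcomp (\sum_(j <- r | P j) F j) i = \sum_(j <- r | P j) hcomp (F j) i.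
Proof. exact: (lin_sum (fun a x y => hcomp_lin a x y i)). Qed.

Lemma hcomp_homogE m x : G m x -> forall i, hcomp x i = if i == m then x else 0.
Proof.
move=> Gx; apply: hcomp_eq; split.
  by move=> j; case: eqP => [->|_] //; apply: homog0.
exists m.+1; split; first by move=> j; case: eqP => // ->; rewrite ltnn.
rewrite big_ord_recr /= eqxx big1 ?add0r // => j _.
by rewrite eqn_leq [(m <= _)%N]leqNgt ltn_ord andbF.
Qed.

Lemma hcomp_homog_id m x : G m x -> hcomp x m = x.
Proof. by move/hcomp_homogE => ->; rewrite eqxx. Qed.

Lemma hcomp_homog_neq m x i : G m x -> i != m -> hcomp x i = 0.
Proof. by move/hcomp_homogE => -> /negbTE ->. Qed.

Lemma hcomp1 i : hcomp 1 i = if i == 0%N then 1 else 0.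
Proof. exact: hcomp_homogE homog1 i. Qed.

Lemma hcompM x y m N : (forall i, (N <= i)%N -> hcomp x i = 0) ->
  (forall i, (N <= i)%N -> hcomp y i = 0) ->
  hcomp (x * y) m = \sum_(i < N) \sum_(j < N)
                      (if (i + j == m)%N then hcomp x i * hcomp y j else 0).
Proof.
move=> hx0 hy0; rewrite {1}(hcomp_sum hx0) {1}(hcomp_sum hy0) mulr_suml hcomp_big.
apply: eq_bigr => i _; rewrite mulr_sumr hcomp_big; apply: eq_bigr => j _.
by rewrite (hcomp_homogE (homogM (hcomp_homog x i) (hcomp_homog y j))) eq_sym.
Qed.

Definition deg_ge (n : nat) (x : A) := forall i, (i < n)%N -> hcomp x i = 0.

Lemma deg_ge_subspace n : subspace (deg_ge n).
Proof.
split=> [i _|a x y xn yn i ltin]; first exact: hcomp0.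
by rewrite hcomp_lin xn // yn // scaler0 addr0.
Qed.

Lemma homog_deg_ge m n x : (n <= m)%N -> G m x -> deg_ge n x.
Proof.
by move=> lenm Gx i ltin; apply: hcomp_homog_neq Gx _; rewrite neq_ltn (leq_trans ltin lenm).
Qed.

Lemma deg_ge_le m n x : (n <= m)%N -> deg_ge m x -> deg_ge n x.
Proof. by move=> lenm xm i ltin; apply: xm; apply: leq_trans lenm. Qed.

Lemma deg_geM a b x y : deg_ge a x -> deg_ge b y -> deg_ge (a + b) (x * y).
Proof.
move=> xa yb; have sab := deg_ge_subspace (a + b).
have [N1 hx0] := hcomp_bounded x; have [N2 hy0] := hcomp_bounded y.
rewrite (hcomp_sum hx0) (hcomp_sum hy0) mulr_suml; apply: (subspace_sum _ sab) => i _.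
rewrite mulr_sumr; apply: (subspace_sum _ sab) => j _.
case: (ltnP i a) => [ltia|leai]; first by rewrite xa // mul0r; apply: subspace0.
case: (ltnP j b) => [ltjb|lebj]; first by rewrite yb // mulr0; apply: subspace0.
apply: (homog_deg_ge (m := (i + j)%N)); first exact: leq_add.
by apply: homogM; apply: hcomp_homog.
Qed.

Lemma deg_ge_tail n x : deg_ge n x -> deg_ge n.+1 (x - hcomp x n).
Proof.
move=> xn i; rewrite ltnS leq_eqVlt => /orP[/eqP ->|ltin].
  by rewrite hcompB (hcomp_homog_id (hcomp_homog x n)) subrr.
by rewrite hcompB xn // (hcomp_homog_neq (hcomp_homog x n)) ?subrr // neq_ltn ltin.
Qed.

Lemma hcompM_deg_ge i j x y : deg_ge i x -> deg_ge j y ->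
  hcomp (x * y) (i + j) = hcomp x i * hcomp y j.
Proof.
move=> xi yj; set xi' := hcomp x i; set yj' := hcomp y j.
have -> : x * y = xi' * yj' + (xi' * (y - yj') + (x - xi') * y).
  by rewrite mulrBr mulrBl addrA [xi' * yj' + _]addrC subrK addrC subrK.
rewrite !hcompD (hcomp_homog_id (homogM (hcomp_homog x i) (hcomp_homog y j))).
have tail1 : deg_ge (i + j).+1 (xi' * (y - yj')).
  by rewrite -addnS; apply: deg_geM; [apply: homog_deg_ge (hcomp_homog x i)|apply: deg_ge_tail].
have tail2 : deg_ge (i + j).+1 ((x - xi') * y).
  by rewrite -addSn; apply: deg_geM => //; apply: deg_ge_tail.
by rewrite tail1 // tail2 // !addr0.
Qed.

Lemma pos_partE x : pos_part G x <-> deg_ge 1 x.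
Proof.
split=> [[n [f [Gf ->]]] i|x1].
  rewrite ltnS leqn0 => /eqP ->; rewrite hcomp_big big1 // => j _.
  exact: hcomp_homog_neq (Gf j) _.
have [N hx0] := hcomp_bounded x.
exists N, (fun i => hcomp x i.+1); split=> [i|]; first exact: hcomp_homog.
rewrite {1}(@hcomp_sum x N.+1); last by move=> i ltNi; apply: hx0; apply: ltnW.
by rewrite big_ord_recl x1 // add0r.
Qed.

Lemma deg_ge1_ideal : two_sided_ideal (deg_ge 1).
Proof.
split; first exact: deg_ge_subspace.
have a0 a : deg_ge 0 a by [].
by split=> a x x1; [move: (deg_geM (a0 a) x1)|move: (deg_geM x1 (a0 a)); rewrite addn0].
Qed.

Lemma deg_ge1_codim1 : qdim (fun _ => True) (deg_ge 1) 1.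
Proof.
exists (fun _ => 1); split=> //; split.
  move=> x _; have [c x0c] := (proj2 G_conn (hcomp x 0)).1 (hcomp_homog x 0).
  exists (fun _ => c); rewrite big_ord1 => i; rewrite ltnS leqn0 => /eqP ->.
  by rewrite hcompB hcompZ hcomp1 eqxx x0c subrr.
move=> c; rewrite big_ord1 => c1 i; rewrite ord1.
have := c1 0%N isT; rewrite hcompZ hcomp1 eqxx.
by move/eqP; rewrite scaler_eq0 oner_eq0 orbF => /eqP.
Qed.

Lemma deg_ge1_sq x : ideal_sq (deg_ge 1) x -> deg_ge 2 x.
Proof.
move=> [n [f [g [f1 [g1 ->]]]]]; apply: subspace_sum => [|i _].
  exact: deg_ge_subspace.
exact: (deg_geM (a := 1%N) (b := 1%N)).
Qed.

Lemma deg1_deg_ge1_sq x : G 1 x -> ideal_sq (deg_ge 1) x -> x = 0.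
Proof. by move=> Gx /deg_ge1_sq x2; rewrite -(hcomp_homog_id Gx); apply: x2. Qed.

Lemma deg1_dependent p m (v : 'I_p -> A) (w : 'I_m -> A) :
  (forall x, deg_ge 1 x ->
     exists a : 'I_p -> k, ideal_sq (deg_ge 1) (x - \sum_i a i *: v i)) ->
  (forall j, G 1 (w j)) -> (p < m)%N ->
  exists a : 'I_m -> k, (exists j, a j != 0) /\ \sum_j a j *: w j = 0.
Proof.
move=> vspan w1 ltpm; have sG1 := homog_subspace 1.
have [a [a_neq0 sq_a]] := span_mod_dependent (ideal_sq_subspace (deg_ge_subspace 1))
  (fun j => homog_deg_ge (leqnn 1) (w1 j)) vspan ltpm.
exists a; split=> //; apply: deg1_deg_ge1_sq sq_a.
by apply: (subspace_sum _ sG1) => j _; apply: (subspaceZ _ sG1).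
Qed.

Hypothesis G_gen : generated_in_deg1 G.

Section Tangent.
Variable J : A -> Prop.
Hypothesis J_ideal : two_sided_ideal J.
Hypothesis J_aug : forall x, exists c, J (x - c *: 1).
Hypothesis J_aug0 : forall c, J (c *: 1) -> c = 0.

Definition deg1_mod_sq (x : A) :=
  exists z e, G 1 z /\ J (z - e *: 1) /\ ideal_sq J (x - (z - e *: 1)).

Let comb_sub_scalar a x y c e :
  a *: (x - c *: 1) + (y - e *: 1) = (a *: x + y) - (a * c + e) *: 1 :> A.
Proof. by rewrite scalerBr scalerDl scalerA opprD addrACA. Qed.

Let mul_add_scalar u v a b :
  (u + a *: 1) * (v + b *: 1) - (a * b) *: 1 = a *: v + b *: u + u * v :> A.
Proof.
rewrite mulrDl !mulrDr -!scalerAl -!scalerAr !mul1r !mulr1 scalerA.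
by rewrite addrA addrK addrC [u * v + _]addrC addrA.
Qed.

Lemma deg1_mod_sq_subspace : subspace deg1_mod_sq.
Proof.
have sJ := ideal_subspace J_ideal; have sJ2 := ideal_sq_subspace sJ.
split.
  exists 0, 0; rewrite scale0r !subr0; split; first exact: homog0.
  by split; apply: subspace0.
move=> a x y [zx [ex [Gzx [Jzx sqx]]]] [zy [ey [Gzy [Jzy sqy]]]].
exists (a *: zx + zy), (a * ex + ey); rewrite -comb_sub_scalar.
split; first by case: (homog_subspace 1) => _; apply.
split; first by case: sJ => _; apply.
have -> : a *: x + y - (a *: (zx - ex *: 1) + (zy - ey *: 1))
        = a *: (x - (zx - ex *: 1)) + (y - (zy - ey *: 1)).
  by rewrite opprD addrACA -scalerBr.
by case: sJ2 => _; apply.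
Qed.

Lemma ideal_sq_deg1_mod_sq x : ideal_sq J x -> deg1_mod_sq x.
Proof.
move=> sqx; exists 0, 0; rewrite scale0r !subr0; split; first exact: homog0.
by split=> //; apply: subspace0 (ideal_subspace J_ideal).
Qed.

(* The tangent space [J/J^2] is spanned by the classes of [z - e(z)], [z] in
   [A_1]: the set of [x] with [x - e(x)] of that form contains [A_1] and is
   a subalgebra, since [(u + a)(v + b) - ab = av + bu + uv] with [uv] in [J^2]. *)
Lemma ideal_deg1_mod_sq x0 : J x0 -> deg1_mod_sq x0.
Proof.
have sJ := ideal_subspace J_ideal; have sW := deg1_mod_sq_subspace.
pose S x := exists c, J (x - c *: 1) /\ deg1_mod_sq (x - c *: 1).
have S_all : forall x, S x.
  apply: G_gen.
  - by exists 1; rewrite scale1r subrr; split; [apply: subspace0 sJ|apply: subspace0 sW].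
  - move=> a x y [cx [Jx Wx]] [cy [Jy Wy]]; exists (a * cx + cy).
    by rewrite -comb_sub_scalar; split; [case: sJ => _; apply|case: sW => _; apply].
  - move=> x y [cx [Jx Wx]] [cy [Jy Wy]]; exists (cx * cy).
    set u := x - cx *: 1 in Jx Wx; set v := y - cy *: 1 in Jy Wy.
    have -> : x * y - (cx * cy) *: 1 = cx *: v + cy *: u + u * v.
      by rewrite -mul_add_scalar !subrK.
    split.
      apply: (subspaceD sJ); last exact: idealMr.
      by apply: (subspaceD sJ); apply: (subspaceZ _ sJ).
    apply: (subspaceD sW); last exact/ideal_sq_deg1_mod_sq/ideal_sq_mul.
    by apply: (subspaceD sW); apply: (subspaceZ _ sW).
  - move=> x Gx; have [c Jc] := J_aug x; exists c; split=> //.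
    exists x, c; split=> //; split=> //; rewrite subrr.
    exact: subspace0 (ideal_sq_subspace sJ).
move=> Jx0; have [c [Jc Wc]] := S_all x0.
suff c0 : c = 0 by rewrite c0 scale0r subr0 in Wc.
by apply: J_aug0; rewrite -[c *: 1](subKr x0); apply: (subspaceB sJ).
Qed.

Lemma ideal_tangent_span d (b : 'I_d -> A) :
  (forall x, G 1 x -> exists a : 'I_d -> k, x = \sum_i a i *: b i) ->
  exists v : 'I_d -> A, (forall i, J (v i)) /\
    forall x, J x -> exists a : 'I_d -> k, ideal_sq J (x - \sum_i a i *: v i).
Proof.
move=> bspan; have sJ := ideal_subspace J_ideal.
have /fin_all_exists [e Je] i := J_aug (b i).
exists (fun i => b i - e i *: 1); split=> // x Jx.
have [z [e0 [Gz [Jz sq_z]]]] := ideal_deg1_mod_sq Jx; have [a za] := bspan z Gz.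
have comb : \sum_i a i *: (b i - e i *: 1) = z - (\sum_i a i * e i) *: 1.
  by rewrite za scaler_suml -sumrB; apply: eq_bigr => i _; rewrite scalerBr scalerA.
suff ae : \sum_i a i * e i = e0 by exists a; rewrite comb ae.
apply/eqP; rewrite -subr_eq0; apply/eqP/J_aug0.
have -> : (\sum_i a i * e i - e0) *: 1 = (z - e0 *: 1) - \sum_i a i *: (b i - e i *: 1).
  by rewrite comb opprB [RHS]addrC subrKA scalerBl.
apply: (subspaceB sJ) => //.
by apply: (subspace_sum _ sJ) => i _; apply: (subspaceZ _ sJ).
Qed.

End Tangent.

Lemma codim1_tdim_deg1_free (J : A -> Prop) s : codim1_ideal_tdim J s ->
  exists z : 'I_s -> A, (forall i, G 1 (z i)) /\
    forall c : 'I_s -> k, \sum_i c i *: z i = 0 -> forall i, c i = 0.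
Proof.
move=> [iJ [codimJ [u [Ju [_ ufree]]]]].
have [J_aug J_aug0] := codim1_idealP iJ codimJ.
have sJ := ideal_subspace iJ; have sJ2 := ideal_sq_subspace sJ.
have /fin_all_exists [z /fin_all_exists [e zeP]] i :=
  ideal_deg1_mod_sq iJ J_aug J_aug0 (Ju i).
exists z; split=> [i|c zc0]; first by case: (zeP i).
have Jze i : J (z i - e i *: 1) by case: (zeP i) => _ [].
have comb : \sum_i c i *: (z i - e i *: 1) = - ((\sum_i c i * e i) *: 1).
  rewrite (eq_bigr (fun i => c i *: z i - (c i * e i) *: 1)).
    by rewrite sumrB zc0 sub0r -scaler_suml.
  by move=> i _; rewrite scalerBr scalerA.
have ce0 : \sum_i c i * e i = 0.
  apply: J_aug0; rewrite -[_ *: 1]opprK -comb -sub0r.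
  apply: (subspaceB sJ (subspace0 sJ)).
  by apply: (subspace_sum _ sJ) => i _; apply: (subspaceZ _ sJ).
apply: ufree.
have -> : \sum_i c i *: u i = \sum_i c i *: (u i - (z i - e i *: 1))
                             + \sum_i c i *: (z i - e i *: 1).
  by rewrite -big_split /=; apply: eq_bigr => i _; rewrite -scalerDr subrK.
rewrite comb ce0 scale0r oppr0 addr0; apply: (subspace_sum _ sJ2) => i _.
by apply: (subspaceZ _ sJ2); case: (zeP i) => _ [].
Qed.

(* For [J = A_{>=1}] the augmentation vanishes on [A_1], so [A_1] maps onto
   the tangent space, and injectively since [(A_{>=1})^2 <= A_{>=2}]. *)
Lemma deg_ge1_tdim d (z : 'I_d -> A) :
  (forall i, G 1 (z i)) -> (forall y, G 1 y -> exists c, y = \sum_i c i *: z i) ->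
  (forall c : 'I_d -> k, \sum_i c i *: z i = 0 -> forall i, c i = 0) ->
  codim1_ideal_tdim (deg_ge 1) d.
Proof.
move=> z1 zspan zfree; have sG1 := homog_subspace 1.
have [aug aug0] := codim1_idealP deg_ge1_ideal deg_ge1_codim1.
split; first exact: deg_ge1_ideal; split; first exact: deg_ge1_codim1.
exists z; split=> [i|]; first exact: homog_deg_ge (leqnn 1) (z1 i).
split=> [x x1|c /deg1_deg_ge1_sq c0]; last first.
  apply/zfree/c0; apply: (subspace_sum _ sG1) => i _; exact: (subspaceZ _ sG1).
have [y [e [Gy [ye1 sq_x]]]] := ideal_deg1_mod_sq deg_ge1_ideal aug aug0 x1.
have e0 : e = 0.
  apply: aug0; rewrite -[e *: 1](subKr y); apply: (subspaceB (deg_ge_subspace 1)) => //.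
  exact: homog_deg_ge (leqnn 1) Gy.
have [c yc] := zspan y Gy; exists c.
by rewrite -yc; rewrite e0 scale0r subr0 in sq_x.
Qed.

End ConnectedGraded.

Section GradedMap.
Variables (k : fieldType) (A B : algType k).
Variables (GA : nat -> A -> Prop) (GB : nat -> B -> Prop).
Variables (GA_conn : connected_graded GA) (GB_conn : connected_graded GB).

Definition gr_map (phi : A -> B) (x : A) : B :=
  \sum_(n < hbound GA_conn x) hcomp GB_conn (phi (hcomp GA_conn x n)) n.

Variable phi : A -> B.
Hypothesis phi_lin : forall (a : k) x y, phi (a *: x + y) = a *: phi x + phi y.

Lemma gr_mapE x N : (forall i, (N <= i)%N -> hcomp GA_conn x i = 0) ->
  gr_map phi x = \sum_(n < N) hcomp GB_conn (phi (hcomp GA_conn x n)) n.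
Proof.
have vanish M : (forall i, (M <= i)%N -> hcomp GA_conn x i = 0) ->
   forall i, (M <= i)%N -> hcomp GB_conn (phi (hcomp GA_conn x i)) i = 0.
  by move=> hx0 i leMi; rewrite hx0 // (lin0 phi_lin) hcomp0.
move=> hx0; rewrite /gr_map.
rewrite -(sum_ord_tail0 (vanish _ (@hboundP _ _ _ GA_conn x)) (leq_maxl _ N)).
by rewrite (sum_ord_tail0 (vanish _ hx0) (leq_maxr _ N)).
Qed.

Lemma gr_map_homog m x : GA m x -> gr_map phi x = hcomp GB_conn (phi x) m.
Proof.
move=> Gx; rewrite (@gr_mapE x m.+1); last first.
  by move=> i ltmi; rewrite (hcomp_homog_neq GA_conn Gx) // neq_ltn ltmi orbT.
rewrite big_ord_recr /= (hcomp_homog_id GA_conn Gx) big1 ?add0r // => i _.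
by rewrite (hcomp_homog_neq GA_conn Gx) ?(lin0 phi_lin) ?hcomp0 // neq_ltn ltn_ord.
Qed.

Lemma gr_map_lin a x y : gr_map phi (a *: x + y) = a *: gr_map phi x + gr_map phi y.
Proof.
set N := maxn (hbound GA_conn x) (hbound GA_conn y).
have hx0 i : (N <= i)%N -> hcomp GA_conn x i = 0.
  by rewrite geq_max => /andP[/hboundP].
have hy0 i : (N <= i)%N -> hcomp GA_conn y i = 0.
  by rewrite geq_max => /andP[_ /hboundP].
rewrite (gr_mapE hx0) (gr_mapE hy0) (@gr_mapE _ N); last first.
  by move=> i leNi; rewrite hcomp_lin hx0 // hy0 // scaler0 addr0.
rewrite scaler_sumr -big_split; apply: eq_bigr => i _.
by rewrite hcomp_lin phi_lin hcomp_lin.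
Qed.

Lemma gr_map_hcomp_sum x N : (forall i, (N <= i)%N -> hcomp GA_conn x i = 0) ->
  gr_map phi x = \sum_(n < N) gr_map phi (hcomp GA_conn x n).
Proof. by move=> hx0; rewrite {1}(hcomp_sum hx0) (lin_sum gr_map_lin). Qed.

Lemma gr_map1 : phi 1 = 1 -> gr_map phi 1 = 1.
Proof.
by move=> phi1; rewrite (gr_map_homog (homog1 GA_conn)) phi1 (hcomp_homog_id _ (homog1 GB_conn)).
Qed.

Hypothesis phiM : forall x y, phi (x * y) = phi x * phi y.

Hypothesis phi_filt : forall n x, deg_ge GA_conn n x -> deg_ge GB_conn n (phi x).

Lemma gr_mapM x y : gr_map phi (x * y) = gr_map phi x * gr_map phi y.
Proof.
have gr_mapM_homog i j u v : GA i u -> GA j v ->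
    gr_map phi (u * v) = gr_map phi u * gr_map phi v.
  move=> Gu Gv; rewrite (gr_map_homog (homogM GA_conn Gu Gv)).
  rewrite (gr_map_homog Gu) (gr_map_homog Gv) phiM hcompM_deg_ge //;
    by apply: phi_filt; apply: (homog_deg_ge GA_conn (leqnn _)).
have [N1 hx0] := hcomp_bounded GA_conn x; have [N2 hy0] := hcomp_bounded GA_conn y.
rewrite {1}(hcomp_sum hx0) {1}(hcomp_sum hy0) (gr_map_hcomp_sum hx0) (gr_map_hcomp_sum hy0).
rewrite mulr_suml (lin_sum gr_map_lin) mulr_suml; apply: eq_bigr => i _.
rewrite mulr_sumr (lin_sum gr_map_lin) mulr_sumr; apply: eq_bigr => j _.
by apply: gr_mapM_homog; apply: hcomp_homog.
Qed.

End GradedMap.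

Section FilteredMaps.
Variables (k : fieldType) (A B : algType k).
Variables (GA : nat -> A -> Prop) (GB : nat -> B -> Prop).
Variables (GA_conn : connected_graded GA) (GB_conn : connected_graded GB).
Variable phi : A -> B.
Hypothesis phi_lin : forall (a : k) x y, phi (a *: x + y) = a *: phi x + phi y.

(* Since [A] is generated by [A_1], [A_{>=n} = (A_{>=1})^n]; hence an
   algebra map sending [A_{>=1}] into [B_{>=1}] preserves the filtrations. *)
Lemma deg_ge_hom : (forall x y, phi (x * y) = phi x * phi y) ->
  generated_in_deg1 GA ->
  (forall x, deg_ge GA_conn 1 x -> deg_ge GB_conn 1 (phi x)) ->
  forall n x, deg_ge GA_conn n x -> deg_ge GB_conn n (phi x).
Proof.
move=> phiM GA_gen phi_pos.
have sB := deg_ge_subspace GB_conn.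
have phi0 m : deg_ge GB_conn m (phi 0) by rewrite (lin0 phi_lin); apply: subspace0.
have phi_hcomp x m : deg_ge GB_conn m (phi (hcomp GA_conn x m)).
  move: x m; apply: GA_gen.
  - by move=> m; rewrite hcomp1; case: eqP => [-> //|_]; apply: phi0.
  - by move=> a x y phix phiy m; rewrite hcomp_lin phi_lin; case: (sB m) => _; apply.
  - move=> x y phix phiy m.
    have [N1 hx0] := hcomp_bounded GA_conn x; have [N2 hy0] := hcomp_bounded GA_conn y.
    have hx0' i : (maxn N1 N2 <= i)%N -> hcomp GA_conn x i = 0.
      by rewrite geq_max => /andP[/hx0].
    have hy0' i : (maxn N1 N2 <= i)%N -> hcomp GA_conn y i = 0.
      by rewrite geq_max => /andP[_ /hy0].
    rewrite (hcompM m hx0' hy0') (lin_sum phi_lin); apply: (subspace_sum _ (sB m)) => i _.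
    rewrite (lin_sum phi_lin); apply: (subspace_sum _ (sB m)) => j _.
    case: eqP => [<-|_]; last exact: phi0.
    by rewrite phiM; apply: deg_geM.
  - move=> x Gx m; rewrite (hcomp_homogE GA_conn Gx); case: eqP => [->|_]; last exact: phi0.
    by apply: phi_pos; apply: (homog_deg_ge GA_conn (leqnn 1) Gx).
move=> n x xn; have [N hx0] := hcomp_bounded GA_conn x.
rewrite (hcomp_sum hx0) (lin_sum phi_lin); apply: (subspace_sum _ (sB n)) => i _.
case: (ltnP i n) => [ltin|lein]; first by rewrite xn.
exact: deg_ge_le lein _.
Qed.

Variable psi : B -> A.
Hypothesis psi_lin : forall (a : k) x y, psi (a *: x + y) = a *: psi x + psi y.
Hypothesis phiK : cancel phi psi.
Hypothesis phi_filt : forall n x, deg_ge GA_conn n x -> deg_ge GB_conn n (phi x).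
Hypothesis psi_filt : forall n y, deg_ge GB_conn n y -> deg_ge GA_conn n (psi y).

(* On [x] of degree [m], [phi x] and [(phi x)_m] agree modulo [B_{>=m+1}],
   which [psi] maps into [A_{>=m+1}]. *)
Lemma gr_mapK : cancel (gr_map GA_conn GB_conn phi) (gr_map GB_conn GA_conn psi).
Proof.
have homogK m x : GA m x -> gr_map GB_conn GA_conn psi (gr_map GA_conn GB_conn phi x) = x.
  move=> Gx; rewrite (gr_map_homog _ _ phi_lin Gx) (gr_map_homog _ _ psi_lin (hcomp_homog _ _ m)).
  have tail := deg_ge_tail (phi_filt (homog_deg_ge GA_conn (leqnn m) Gx)).
  rewrite -[hcomp GB_conn _ m](subKr (phi x)) (linB psi_lin) phiK hcompB.
  by rewrite (hcomp_homog_id GA_conn Gx) (psi_filt tail (ltnSn m)) subr0.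
move=> x; have [N hx0] := hcomp_bounded GA_conn x.
rewrite (gr_map_hcomp_sum GB_conn phi_lin hx0) (lin_sum (gr_map_lin GB_conn GA_conn psi_lin)).
by rewrite [RHS](hcomp_sum hx0); apply: eq_bigr => i _; apply: homogK; apply: hcomp_homog.
Qed.

End FilteredMaps.

Lemma graded_iso_of_aug_iso (k : fieldType) (A B : algType k)
    (GA : nat -> A -> Prop) (GB : nat -> B -> Prop) (phi : A -> B) :
  connected_graded GA -> connected_graded GB ->
  generated_in_deg1 GA -> generated_in_deg1 GB -> alg_iso phi ->
  (forall x, pos_part GA x <-> pos_part GB (phi x)) ->
  exists f : A -> B, alg_iso f /\ (forall i x, GA i x <-> GB i (f x)).
Proof.
move=> GA_conn GB_conn GA_gen GB_gen [phi_lin [phiM [phi1 [psi phiK psiK]]]] phi_pos.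
have psi_lin := inv_lin phi_lin phiK psiK; have psiM := invM phiM phiK psiK.
have phi_pos1 x : deg_ge GA_conn 1 x -> deg_ge GB_conn 1 (phi x).
  by move/(pos_partE GA_conn)/phi_pos/(pos_partE GB_conn).
have psi_pos1 y : deg_ge GB_conn 1 y -> deg_ge GA_conn 1 (psi y).
  by rewrite -{1}(psiK y) => /(pos_partE GB_conn)/phi_pos/(pos_partE GA_conn).
have phi_filt := deg_ge_hom phi_lin phiM GA_gen phi_pos1.
have psi_filt := deg_ge_hom psi_lin psiM GB_gen psi_pos1.
exists (gr_map GA_conn GB_conn phi); split.
  split; first exact: gr_map_lin.
  split; first exact: gr_mapM.
  split; first exact: gr_map1.
  by exists (gr_map GB_conn GA_conn psi); apply: gr_mapK.
move=> i x; split=> [Gx|Gy].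
  by rewrite (gr_map_homog _ _ phi_lin Gx); apply: hcomp_homog.
rewrite -(gr_mapK phi_lin psi_lin phiK phi_filt psi_filt x).
by rewrite (gr_map_homog _ _ psi_lin Gy); apply: hcomp_homog.
Qed.

(* [phi(A_{>=1})] yields [d] independent elements of [B_1], while the tangent
   space of [phi^-1(B_{>=1})] is spanned by [d] vectors, so every [d + 1]
   elements of [B_1] are dependent. *)
Lemma aug_tdim_iso (k : fieldType) (A B : algType k)
    (GA : nat -> A -> Prop) (GB : nat -> B -> Prop) (d : nat) (phi : A -> B)
    (GA_conn : connected_graded GA) (GB_conn : connected_graded GB) :
  generated_in_deg1 GA -> generated_in_deg1 GB ->
  sdim (GA 1%N) d -> codim1_ideal_tdim (pos_part GA) d -> alg_iso phi ->
  codim1_ideal_tdim (deg_ge GB_conn 1) d.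
Proof.
move=> GA_gen GB_gen [b [_ [bspan _]]] tdimA [phi_lin [phiM [_ [psi phiK psiK]]]].
have psi_lin := inv_lin phi_lin phiK psiK; have psiM := invM phiM phiK psiK.
have [z [z1 zfree]] := codim1_tdim_deg1_free GB_conn GB_gen
  (preim_codim1_ideal_tdim psi_lin psiM psiK phiK tdimA).
apply: (deg_ge1_tdim GB_conn GB_gen z1 _ zfree) => y y1.
have iI := preim_ideal phi_lin phiM (deg_ge1_ideal GB_conn).
have [I_aug I_aug0] := codim1_idealP iI (preim_qdim phi_lin psiK (deg_ge1_codim1 GB_conn)).
have bspan' x : GA 1 x -> exists a : 'I_d -> k, x = \sum_i a i *: b i.
  by move=> x1; have [a xa] := bspan x x1; exists a; apply/subr0_eq.
have [v [_ vspan]] := ideal_tangent_span GA_conn GA_gen iI I_aug I_aug0 bspan'.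
have zy1 (j : 'I_d.+1) : GB 1 (oapp z y (unlift ord0 j)).
  by case: (unlift ord0 j).
have [a [a_neq0 rel]] :=
  deg1_dependent (preim_span_mod_sq phi_lin phiM phiK psiK vspan) zy1 (ltnSn d).
exact: free_dependent_span zfree a_neq0 rel.
Qed.

Theorem lemma1p2 (k : fieldType) (A B : algType k)
    (GA : nat -> A -> Prop) (GB : nat -> B -> Prop) (d : nat) :
  connected_graded GA -> connected_graded GB ->
  generated_in_deg1 GA -> generated_in_deg1 GB ->
  sdim (GA 1%N) d ->
  codim1_ideal_tdim (pos_part GA) d ->
  (forall I : A -> Prop, codim1_ideal_tdim I d -> forall x, I x <-> pos_part GA x) ->
  (exists f : A -> B, alg_iso f) ->
  exists f : A -> B, alg_iso f /\ (forall i x, GA i x <-> GB i (f x)).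
Proof.
move=> GA_conn GB_conn GA_gen GB_gen dimA1 tdimA A_aug_unique [phi phi_iso].
have tdimB := aug_tdim_iso GA_conn GB_conn GA_gen GB_gen dimA1 tdimA phi_iso.
have [phi_lin [phiM [_ [psi phiK psiK]]]] := phi_iso.
have tdimI := preim_codim1_ideal_tdim phi_lin phiM phiK psiK tdimB.
apply: (graded_iso_of_aug_iso GA_conn GB_conn GA_gen GB_gen phi_iso) => x.
by rewrite (pos_partE GB_conn) (A_aug_unique _ tdimI x).
Qed.
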